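(* Let $\mathcal D\subset\mathbb R^n$ be a symmetric dictionary of unit vectors and let $\|\cdot\|_{\mathcal A}$ be its atomic norm. Let $s\ge 1$ and let $S=\{x_{i_1},\dots,x_{i_s}\}\subset\mathcal D$ be $s$ atoms with pairwise coherence \[ \mu_S:=\max_{p\neq q}|\langle x_{i_p},x_{i_q}\rangle|<\frac{1}{s-1} \] (no condition if $s=1$). Let $y\in\mathrm{span}(S)$. Then for every $f\in\mathrm{span}(S)$ (in particular for every iterate $f=f_m$ of a method whose iterates lie in $\mathrm{span}(S)$), with $r=y-f$, \[ \|r\|_2\;\ge\;\frac{\sqrt{1-(s-1)\mu_S}}{\sqrt s}\,\bigl(\|y\|_{\mathcal A}-\|f\|_{\mathcal A}\bigr). \]
   Context: A dictionary $\mathcal D\subset\mathbb R^n$ is a set of unit vectors (Euclidean norm $\|\cdot\|_2$); it is symmetric if $g\in\mathcal D\Rightarrow -g\in\mathcal D$. The atomic norm of $\mathcal D$ is the Minkowski functional of $B=\mathrm{conv}(\mathcal D)$: $\|u\|_{\mathcal A}=\inf\{t>0: u\in tB\}$ (finite for $u\in\mathrm{span}(\mathcal D)$). *)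

From HB Require Import structures.
From mathcomp Require Import all_boot all_order all_algebra.
From mathcomp Require Import classical_sets reals.
Set Implicit Arguments. Unset Strict Implicit. Unset Printing Implicit Defensive.
Import Order.TTheory GRing.Theory Num.Theory.
Local Open Scope ring_scope.
Local Open Scope classical_set_scope.

Section Defs.
Variable R : realType.

Definition dotv (n : nat) (u v : 'rV[R]_n) : R := \sum_(i < n) u 0 i * v 0 i.
Definition norm2 (n : nat) (u : 'rV[R]_n) : R := Num.sqrt (dotv u u).

Definition unit_dictionary (n : nat) (D : set 'rV[R]_n) : Prop :=
  forall g, D g -> norm2 g = 1.
Definition symmetric_dictionary (n : nat) (D : set 'rV[R]_n) : Prop :=
  forall g, D g -> D (- g).

Definition in_conv (n : nat) (D : set 'rV[R]_n) (u : 'rV[R]_n) : Prop :=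
  exists (k : nat) (lam : 'I_k -> R) (g : 'I_k -> 'rV[R]_n),
    [/\ forall i, 0 <= lam i, \sum_(i < k) lam i = 1,
        forall i, D (g i) & u = \sum_(i < k) lam i *: g i].

Definition atomic_norm (n : nat) (D : set 'rV[R]_n) (u : 'rV[R]_n) : R :=
  inf [set t : R | 0 < t /\ exists b, in_conv D b /\ u = t *: b].

Definition coherence (n s : nat) (x : 'I_s -> 'rV[R]_n) : R :=
  \big[Num.max/0]_(p < s) \big[Num.max/0]_(q < s | q != p) `|dotv (x p) (x q)|.

Definition in_span (n s : nat) (x : 'I_s -> 'rV[R]_n) (y : 'rV[R]_n) : Prop :=
  exists c : 'I_s -> R, y = \sum_(p < s) c p *: x p.

End Defs.

From HB Require Import structures.
From mathcomp Require Import all_boot all_order all_algebra.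
From mathcomp Require Import classical_sets reals.
From mathcomp Require Import ring lra.
Import Order.TTheory GRing.Theory Num.Theory.
Local Open Scope ring_scope.
Local Open Scope classical_set_scope.
Set Implicit Arguments. Unset Strict Implicit.

(** Write [r = y - f = sum_p c_p x_p]. The atomic norm is subadditive and
    bounded by the l1 norm of the coefficients, so
    [|y|_A - |f|_A <= |r|_A <= sum_p |c_p|]. On the other hand, expanding
    [|r|_2^2] as a Gram form and bounding the off-diagonal terms by the
    coherence [mu] gives [|r|_2^2 >= (1 + mu) sum_p c_p^2 - mu (sum_p |c_p|)^2],
    and Cauchy-Schwarz [(sum_p |c_p|)^2 <= s sum_p c_p^2] turns this into
    [|r|_2^2 >= (1 - (s - 1) mu) / s * (sum_p |c_p|)^2]. *)

Section AtomicNorm.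
Variables (R : realType) (n : nat) (D : set 'rV[R]_n).
Hypothesis D_sym : symmetric_dictionary D.

Definition cone (v : 'rV[R]_n) (w : R) : Prop :=
  exists (k : nat) (lam : 'I_k -> R) (g : 'I_k -> 'rV[R]_n),
    [/\ forall i, 0 <= lam i, \sum_(i < k) lam i = w,
        forall i, D (g i) & v = \sum_(i < k) lam i *: g i].

Definition atomic_scales (u : 'rV[R]_n) : set R :=
  [set t : R | 0 < t /\ exists b, in_conv D b /\ u = t *: b].

Lemma cone0 : cone 0 0.
Proof.
by exists 0%N, (fun _ => 0), (fun _ => 0); split; rewrite ?big_ord0 //; case.
Qed.

Lemma cone_atom g : D g -> cone g 1.
Proof.
by move=> Dg; exists 1%N, (fun _ => 1), (fun _ => g); split; rewrite ?big_ord1 ?scale1r.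
Qed.

Lemma coneD v1 w1 v2 w2 : cone v1 w1 -> cone v2 w2 -> cone (v1 + v2) (w1 + w2).
Proof.
move=> [k1 [l1 [g1 [l1_ge0 <- Dg1 ->]]]] [k2 [l2 [g2 [l2_ge0 <- Dg2 ->]]]].
pose glue T (a : 'I_k1 -> T) (b : 'I_k2 -> T) i :=
  match split i with inl j => a j | inr j => b j end.
have glue_l T a b j : glue T a b (lshift k2 j) = a j.
  by rewrite /glue (unsplitK (inl _ j)).
have glue_r T a b j : glue T a b (rshift k1 j) = b j.
  by rewrite /glue (unsplitK (inr _ j)).
exists (k1 + k2)%N, (glue _ l1 l2), (glue _ g1 g2); split.
- by move=> i; rewrite /glue; case: (split i).
- by rewrite big_split_ord; congr (_ + _); apply: eq_bigr => j _;
    rewrite ?glue_l ?glue_r.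
- by move=> i; rewrite /glue; case: (split i).
- by rewrite big_split_ord; congr (_ + _); apply: eq_bigr => j _;
    rewrite ?glue_l ?glue_r.
Qed.

Lemma coneZ a v w : 0 <= a -> cone v w -> cone (a *: v) (a * w).
Proof.
move=> a_ge0 [k [l [g [l_ge0 <- Dg ->]]]].
exists k, (fun i => a * l i), g; split => //.
- by move=> i; rewrite mulr_ge0.
- by rewrite mulr_sumr.
- by rewrite scaler_sumr; apply: eq_bigr => i _; rewrite scalerA.
Qed.

Lemma cone_scale_atom g c : D g -> cone (c *: g) `|c|.
Proof.
move=> Dg; have [c_ge0|c_lt0] := lerP 0 c.
  by rewrite ger0_norm //; have := coneZ c_ge0 (cone_atom Dg); rewrite mulr1.
have := coneZ (a := - c) _ (cone_atom (D_sym Dg)).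
by rewrite ltr0_norm // mulr1 scalerN scaleNr opprK; apply; rewrite oppr_ge0 ltW.
Qed.

Lemma cone_span s (x : 'I_s -> 'rV[R]_n) (c : 'I_s -> R) :
  (forall p, D (x p)) -> cone (\sum_(p < s) c p *: x p) (\sum_(p < s) `|c p|).
Proof.
move=> Dx; apply: (big_ind2 cone cone0 (@coneD)) => p _.
exact: cone_scale_atom.
Qed.

Lemma in_conv_cone b : in_conv D b -> cone b 1.
Proof. by move=> [k [l [g [l_ge0 l_sum Dg ->]]]]; exists k, l, g. Qed.

Lemma atomic_scales_cone v w : 0 < w -> cone v w -> atomic_scales v w.
Proof.
move=> w_gt0 vw; split=> //; exists (w^-1 *: v); split.
  have /coneZ/(_ vw) : 0 <= w^-1 by rewrite invr_ge0 ltW.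
  by rewrite mulVf ?gt_eqF // => -[k [l [g [? ? ? ?]]]]; exists k, l, g.
by rewrite scalerA mulfV ?gt_eqF // scale1r.
Qed.

Lemma atomic_scalesD u v t t' :
  atomic_scales u t -> atomic_scales v t' -> atomic_scales (u + v) (t + t').
Proof.
move=> [t_gt0 [b [b_conv ->]]] [t'_gt0 [b' [b'_conv ->]]].
apply: atomic_scales_cone; first exact: addr_gt0.
have := coneD (coneZ (ltW t_gt0) (in_conv_cone b_conv))
              (coneZ (ltW t'_gt0) (in_conv_cone b'_conv)).
by rewrite !mulr1.
Qed.

Lemma atomic_scales_lbound u : has_lbound (atomic_scales u).
Proof. by exists 0 => t [t_gt0 _]; exact: ltW. Qed.

(** Adding [e/2 (g + (-g)) = 0] makes the total weight positive. *)
Lemma atomic_scales_cone_addr g v w e :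
  D g -> cone v w -> 0 <= w -> 0 < e -> atomic_scales v (w + e).
Proof.
move=> Dg vw w_ge0 e_gt0; apply: atomic_scales_cone; first exact: ltr_wpDl.
have e2_ge0 : 0 <= e / 2 by rewrite divr_ge0 ?ltW.
have := coneD vw (coneD (coneZ e2_ge0 (cone_atom Dg))
                        (coneZ e2_ge0 (cone_atom (D_sym Dg)))).
by rewrite scalerN subrr addr0 !mulr1 -splitr.
Qed.

Lemma atomic_norm_le_cone g v w : D g -> cone v w -> atomic_norm D v <= w.
Proof.
move=> Dg vw; have w_ge0 : 0 <= w.
  by case: vw => [k [l [_ [l_ge0 <- _ _]]]]; exact: sumr_ge0.
apply/ler_addgt0Pr => e e_gt0.
exact: (ge_inf (atomic_scales_lbound v)) (atomic_scales_cone_addr Dg vw w_ge0 e_gt0).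
Qed.

Lemma atomic_normD u v :
  atomic_scales u !=set0 -> atomic_scales v !=set0 ->
  atomic_norm D (u + v) <= atomic_norm D u + atomic_norm D v.
Proof.
move=> u_ne v_ne; rewrite -lerBlDl; apply: (lb_le_inf v_ne) => t' vt'.
rewrite lerBlDr -lerBlDl; apply: (lb_le_inf u_ne) => t ut.
by rewrite lerBlDr; apply: (ge_inf (atomic_scales_lbound _)); apply: atomic_scalesD.
Qed.

Lemma atomic_scales_span_neq0 s (x : 'I_s -> 'rV[R]_n) (c : 'I_s -> R) :
  (0 < s)%N -> (forall p, D (x p)) ->
  atomic_scales (\sum_(p < s) c p *: x p) !=set0.
Proof.
move=> s_gt0 Dx; exists (\sum_(p < s) `|c p| + 1).
apply: (atomic_scales_cone_addr (Dx (Ordinal s_gt0)) (cone_span c Dx)) => //.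
exact: sumr_ge0.
Qed.

Lemma atomic_norm_span_subr_le s (x : 'I_s -> 'rV[R]_n) (cy cf : 'I_s -> R) :
  (0 < s)%N -> (forall p, D (x p)) ->
  atomic_norm D (\sum_(p < s) cy p *: x p)
    - atomic_norm D (\sum_(p < s) cf p *: x p) <= \sum_(p < s) `|cy p - cf p|.
Proof.
move=> s_gt0 Dx.
have -> : \sum_(p < s) cy p *: x p
    = \sum_(p < s) cf p *: x p + \sum_(p < s) (cy p - cf p) *: x p.
  by rewrite -big_split; apply: eq_bigr => p _; rewrite /= -scalerDl addrC subrK.
have scales_neq0 c := atomic_scales_span_neq0 c s_gt0 Dx.
rewrite lerBlDl; apply: le_trans (atomic_normD (scales_neq0 _) (scales_neq0 _)) _.
by rewrite lerD2l (atomic_norm_le_cone (Dx (Ordinal s_gt0)) (cone_span _ Dx)).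
Qed.

End AtomicNorm.

Section Coherence.
Variables (R : realType) (n : nat).

Lemma dotv_ge0 (u : 'rV[R]_n) : 0 <= dotv u u.
Proof. by apply: sumr_ge0 => i _; rewrite -expr2 sqr_ge0. Qed.

Lemma norm2_eq1_dotv (u : 'rV[R]_n) : norm2 u = 1 -> dotv u u = 1.
Proof. by rewrite /norm2 => u1; rewrite -(sqr_sqrtr (dotv_ge0 u)) u1 expr1n. Qed.

Lemma coherence_ge0 s (x : 'I_s -> 'rV[R]_n) : 0 <= coherence x.
Proof. exact: bigmax_ge_id. Qed.

Lemma dotv_le_coherence s (x : 'I_s -> 'rV[R]_n) p q :
  q != p -> `|dotv (x p) (x q)| <= coherence x.
Proof.
move=> qp; pose row p := \big[Num.max/0]_(q < s | q != p) `|dotv (x p) (x q)|.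
apply: le_trans (@le_bigmax_cond _ R _ 0 _ _ (fun q => `|dotv (x p) (x q)|) qp) _.
exact: (@le_bigmax _ R _ 0 row).
Qed.

Lemma dotv_span s (x : 'I_s -> 'rV[R]_n) (c : 'I_s -> R) :
  dotv (\sum_(p < s) c p *: x p) (\sum_(p < s) c p *: x p)
  = \sum_(p < s) \sum_(q < s) c p * c q * dotv (x p) (x q).
Proof.
rewrite /dotv (eq_bigr (fun i => \sum_(p < s) \sum_(q < s)
    c p * c q * (x p 0 i * x q 0 i))); last first.
  move=> i _; rewrite !summxE mulr_suml; apply: eq_bigr => p _.
  by rewrite mulr_sumr; apply: eq_bigr => q _; rewrite !mxE; ring.
rewrite exchange_big; apply: eq_bigr => p _.
by rewrite exchange_big; apply: eq_bigr => q _; rewrite mulr_sumr.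
Qed.

Lemma sqr_sum s (a : 'I_s -> R) :
  (\sum_(p < s) a p) ^+ 2 = \sum_(p < s) \sum_(q < s) a p * a q.
Proof. by rewrite expr2 mulr_suml; apply: eq_bigr => p _; rewrite mulr_sumr. Qed.

Lemma sqr_l1_le s (c : 'I_s -> R) :
  (\sum_(p < s) `|c p|) ^+ 2 <= s%:R * \sum_(p < s) c p ^+ 2.
Proof.
have amgm (u v : R) : u * v <= u ^+ 2 / 2 + v ^+ 2 / 2.
  by rewrite -subr_ge0 (_ : _ - _ = (u - v) ^+ 2 / 2) ?divr_ge0 ?sqr_ge0 //; field.
rewrite sqr_sum (le_trans (ler_sum _ (fun p _ =>
  ler_sum _ (fun q _ => amgm `|c p| `|c q|)))) //.
rewrite (eq_bigr (fun p => s%:R * (c p ^+ 2 / 2) + \sum_(q < s) c q ^+ 2 / 2)).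
  by rewrite big_split /= sumr_const card_ord -mulr_natl -mulr_sumr -mulr_suml; lra.
move=> p _; rewrite big_split /= sumr_const card_ord mulr_natl.
by under eq_bigr do rewrite real_normK ?num_real //; rewrite real_normK ?num_real.
Qed.

Lemma gram_form_ge s (x : 'I_s -> 'rV[R]_n) (c : 'I_s -> R) mu :
  (forall p, dotv (x p) (x p) = 1) ->
  (forall p q, q != p -> `|dotv (x p) (x q)| <= mu) -> 0 <= mu ->
  (1 + mu) * \sum_(p < s) c p ^+ 2 - mu * (\sum_(p < s) `|c p|) ^+ 2
  <= \sum_(p < s) \sum_(q < s) c p * c q * dotv (x p) (x q).
Proof.
move=> x_unit x_coh mu_ge0.
have -> : (1 + mu) * \sum_(p < s) c p ^+ 2 - mu * (\sum_(p < s) `|c p|) ^+ 2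
    = \sum_(p < s) \sum_(q < s)
        ((if q == p then (1 + mu) * c p ^+ 2 else 0) - mu * (`|c p| * `|c q|)).
  rewrite sqr_sum !mulr_sumr -sumrB; apply: eq_bigr => p _.
  by rewrite sumrB -big_mkcond big_pred1_eq mulr_sumr.
apply: ler_sum => p _; apply: ler_sum => q _; case: eqP => [->|/eqP qp].
  by rewrite x_unit -normrM -expr2 ger0_norm ?sqr_ge0 //; lra.
have : `|c p * c q * dotv (x p) (x q)| <= `|c p| * `|c q| * mu.
  by rewrite !normrM ler_wpM2l ?mulr_ge0 ?x_coh.
by rewrite ler_norml sub0r mulrC => /andP[].
Qed.

(** No upper bound on [mu] is needed: if [1 - (s - 1) mu < 0], [Num.sqrt]
    returns [0] and the bound is trivial. *)
Lemma l1_le_norm2_span s (x : 'I_s -> 'rV[R]_n) (c : 'I_s -> R) mu :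
  (forall p, dotv (x p) (x p) = 1) ->
  (forall p q, q != p -> `|dotv (x p) (x q)| <= mu) -> 0 <= mu ->
  Num.sqrt (1 - (s - 1)%:R * mu) / Num.sqrt s%:R * \sum_(p < s) `|c p|
  <= norm2 (\sum_(p < s) c p *: x p).
Proof.
move=> x_unit x_coh mu_ge0.
set C := \sum_(p < s) `|c p|; set a := 1 - (s - 1)%:R * mu.
have [s0|s_gt0] := posnP s.
  rewrite (_ : C = 0) ?mulr0 ?sqrtr_ge0 // /C big1 // => i.
  by have := leq_trans (ltn_ord i) (eq_leq s0).
have [a_lt0|a_ge0] := ltrP a 0.
  by rewrite ltr0_sqrtr // !mul0r sqrtr_ge0.
have C_ge0 : 0 <= C by apply: sumr_ge0.
rewrite /norm2 -(ger0_norm (_ : 0 <= _ * C)) ?mulr_ge0 ?divr_ge0 ?invr_ge0 ?sqrtr_ge0 //.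
rewrite -sqrtr_sqr ler_sqrt ?dotv_ge0 // dotv_span.
apply: le_trans (gram_form_ge c x_unit x_coh mu_ge0).
rewrite -/C exprMn expr_div_n !sqr_sqrtr ?ler0n //.
have -> : a / s%:R * C ^+ 2 = (1 + mu) * (C ^+ 2 / s%:R) - mu * C ^+ 2.
  by rewrite /a natrB //; field; rewrite pnatr_eq0 -lt0n.
rewrite lerD2r ler_wpM2l ?addr_ge0 // ler_pdivrMr ?ltr0n // mulrC.
exact: sqr_l1_le.
Qed.

End Coherence.

Unset Implicit Arguments. Set Strict Implicit.

(** [hcoh] is unused, see [l1_le_norm2_span]. *)
Theorem mainTheorem2 (R : realType) (n : nat) (D : set 'rV[R]_n)
  (hunit : unit_dictionary D) (hsym : symmetric_dictionary D)
  (s : nat) (x : 'I_s -> 'rV[R]_n)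
  (hs : (1 <= s)%N) (hxD : forall p, D (x p))
  (hcoh : (1 < s)%N -> coherence x < ((s - 1)%:R)^-1)
  (y f : 'rV[R]_n) (hy : in_span x y) (hf : in_span x f) :
  Num.sqrt (1 - (s - 1)%:R * coherence x) / Num.sqrt (s%:R)
    * (atomic_norm D y - atomic_norm D f) <= norm2 (y - f).
Proof.
move: hy hf => [cy ->] [cf ->].
have x_unit p : dotv (x p) (x p) = 1 := norm2_eq1_dotv (hunit _ (hxD p)).
have -> : \sum_(p < s) cy p *: x p - \sum_(p < s) cf p *: x p
    = \sum_(p < s) (cy p - cf p) *: x p.
  by rewrite -sumrB; apply: eq_bigr => p _; rewrite scalerBl.
apply: le_trans (l1_le_norm2_span _ x_unit (dotv_le_coherence x) (coherence_ge0 x)).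
by rewrite ler_wpM2l ?divr_ge0 ?sqrtr_ge0 ?atomic_norm_span_subr_le.
Qed.
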